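(* Let $p,q\ge0$ with $n=p+q>0$, and let $\Gamma=\{(a_1,\dots,a_n)\in\mathbb{Z}^n\mid a_1+\cdots+a_n\in2\mathbb{Z}\}$. For $A\in\{A^+_{p|q},A^-_{q|p}\}$ let $C(A)=\bigoplus_{d\in\Gamma}A_d$ be the subsuperalgebra of elements whose $\mathbb{Z}^n$-support lies in $\Gamma$. Then $C(A^+_{p|q})$ and $C(A^-_{q|p})$ are isomorphic superalgebras.
   Context: $\Bbbk$ is an algebraically closed field of characteristic $0$. For integers $a,b\ge0$, $N=a+b$, and a sign $\pm$, the superalgebra $A^\pm_{a|b}$ is generated by $x_i,\partial_i$ ($1\le i\le N$), of parity $0$ for $i\le a$ and $1$ for $i>a$, subject to $[\partial_i,x_j]_\pm=\delta_{ij}$, $[x_i,x_j]_\pm=[\partial_i,\partial_j]_\pm=0$, with $[u,v]_\pm=uv\pm(-1)^{p(u)p(v)}vu$. It is $\mathbb{Z}^N$-graded by $\deg x_i=\mathbf{e}_i$, $\deg\partial_i=-\mathbf{e}_i$. (Thus $A^+_{p|q}$ has $p$ even Clifford pairs and $q$ odd Weyl pairs, while $A^-_{q|p}$ has $q$ even Weyl pairs and $p$ odd Clifford pairs.) *)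

From HB Require Import structures.
From mathcomp Require Import all_boot all_order all_algebra all_field.
Import GRing.Theory.
Local Open Scope ring_scope.

(* A "generator" of A_{a|b}: (true, i) stands for x_i and (false, i) for
   partial_i, with i : 'I_N, N = a + b (0-indexed, so x_i is odd iff a <= i). *)
Definition gen (N : nat) := (bool * 'I_N)%type.

Definition odd_idx (a : nat) {N : nat} (i : 'I_N) : bool := (a <= i)%N.

Definition sbracket {k : fieldType} {A : algType k} (plus : bool) (pu pv : bool)
  (u v : A) : A :=
  u * v + (if plus then 1 else -1) * (-1) ^+ (pu && pv) * (v * u).

Definition Arels {k : fieldType} {A : algType k} (plus : bool) (a b : nat)
  (x d : 'I_(a + b) -> A) : Prop :=
  [/\ forall i j, sbracket plus (odd_idx a i) (odd_idx a j) (d i) (x j) = (i == j)%:R,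
      forall i j, sbracket plus (odd_idx a i) (odd_idx a j) (x i) (x j) = 0 &
      forall i j, sbracket plus (odd_idx a i) (odd_idx a j) (d i) (d j) = 0].

Definition is_alg_hom {k : fieldType} {A B : algType k} (f : A -> B) : Prop :=
  [/\ forall (c : k) (u v : A), f (c *: u + v) = c *: f u + f v,
      f 1 = 1 &
      forall u v : A, f (u * v) = f u * f v].

(* (A, x, d) is the superalgebra A^pm_{a|b} presented by generators x_i,
   partial_i and the relations above: it satisfies the relations and is
   universal (initial) among k-algebras with such families. *)
Definition is_A {k : fieldType} (plus : bool) (a b : nat) (A : algType k)
  (x d : 'I_(a + b) -> A) : Prop :=
  Arels plus a b x d /\
  forall (B : algType k) (y e : 'I_(a + b) -> B), Arels plus a b y e ->
    (exists f : A -> B, is_alg_hom f /\ forall i, f (x i) = y i /\ f (d i) = e i) /\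
    (forall f g : A -> B, is_alg_hom f -> is_alg_hom g ->
       (forall i, f (x i) = g (x i) /\ f (d i) = g (d i)) -> f =1 g).

Definition gen_val {k : fieldType} {A : algType k} {N : nat} (x d : 'I_N -> A)
  (g : gen N) : A := if g.1 then x g.2 else d g.2.
Definition word_val {k : fieldType} {A : algType k} {N : nat} (x d : 'I_N -> A)
  (w : seq (gen N)) : A := \prod_(g <- w) gen_val x d g.

Definition word_deg {N : nat} (w : seq (gen N)) (i : 'I_N) : int :=
  (count_mem (true, i) w)%:Z - (count_mem (false, i) w)%:Z.

Definition in_Gamma {N : nat} (dg : 'I_N -> int) : bool :=
  (2 %| \sum_(i < N) dg i)%Z.

Definition word_par (a : nat) {N : nat} (w : seq (gen N)) : bool :=
  odd (count (fun g : gen N => odd_idx a g.2) w).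

Definition in_span {k : fieldType} {A : algType k} {N : nat} (x d : 'I_N -> A)
  (P : seq (gen N) -> bool) (u : A) : Prop :=
  exists s : seq (k * seq (gen N)),
    all (fun pw => P pw.2) s /\ u = \sum_(pw <- s) pw.1 *: word_val x d pw.2.

Definition Acomp {k : fieldType} {A : algType k} {N : nat} (x d : 'I_N -> A)
  (dg : 'I_N -> int) (u : A) : Prop :=
  in_span x d (fun w => [forall i, word_deg w i == dg i]) u.

Definition Cpart {k : fieldType} {A : algType k} {N : nat} (x d : 'I_N -> A)
  (u : A) : Prop :=
  in_span x d (fun w => in_Gamma (word_deg w)) u.

Definition Apar {k : fieldType} {A : algType k} (a : nat) {N : nat}
  (x d : 'I_N -> A) (par : bool) (u : A) : Prop :=
  in_span x d (fun w => word_par a w == par) u.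

Definition super_iso {k : fieldType} {A1 A2 : algType k}
  (C1 : A1 -> Prop) (P1 : bool -> A1 -> Prop)
  (C2 : A2 -> Prop) (P2 : bool -> A2 -> Prop) : Prop :=
  exists f : A1 -> A2,
    [/\ forall u, C1 u -> C2 (f u),
        forall v, C2 v -> exists2 u, C1 u & f u = v &
        forall u v, C1 u -> C1 v -> f u = f v -> u = v] /\
    [/\ forall (c : k) u v, C1 u -> C1 v -> f (c *: u + v) = c *: f u + f v,
        f 1 = 1,
        forall u v, C1 u -> C1 v -> f (u * v) = f u * f v &
        forall (par : bool) u, C1 u -> P1 par u -> P2 par (f u)].

From HB Require Import structures.
From mathcomp Require Import all_boot all_order all_algebra all_field ring.
Import GRing.Theory.
Local Open Scope ring_scope.

(* Write A for A^pl_{a|b}; swapping the two blocks of indices turns it into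
   A' = A^(-pl)_{b|a}, in which every generator has the opposite parity.  Let
   theta be the parity automorphism of A and A # Z/2 = A + A tau (tau^2 = 1,
   tau u = theta(u) tau) the smash product.  If r^2 = -1, the elements
   r^(p(g)) g tau satisfy the relations of A', since moving tau across a
   generator produces exactly the flip of the bracket sign and of the parities.
   By the universal property of A' each word of A' goes to a scalar multiple of
   the same word in A, times tau^(length); words of even length span C(A'), so
   the A-component is an algebra map C(A') -> C(A).  Doing the same in the other
   direction, the two composites rescale each even word by scalars whose
   product is 1. *)

Lemma dvdz2_subn (m n : nat) : (2 %| m%:Z - n%:Z)%Z = ~~ odd (m + n).
Proof.
have -> : m%:Z - n%:Z = (m + n)%:Z - (n * 2)%N%:Z by rewrite PoszD PoszM; ring.
by rewrite rpredBr dvdzE ?dvdn2 //= oddM andbF.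
Qed.

Lemma sum_count_gen N (b : bool) (w : seq (gen N)) :
  (\sum_(i < N) count_mem (b, i) w = count (fun g : gen N => g.1 == b) w)%N.
Proof.
elim: w => [|[b' j] w IH] /=; first by rewrite big1.
rewrite big_split /= IH; congr (_ + _)%N; case: (b' =P b) => [->|nb].
  by rewrite (bigD1 j) //= eqxx big1 // => i ji; rewrite xpair_eqE eq_sym (negbTE ji) andbF.
by rewrite big1 // => i _; rewrite xpair_eqE (introF eqP nb).
Qed.

Lemma in_Gamma_word N (w : seq (gen N)) : in_Gamma (word_deg w) = ~~ odd (size w).
Proof.
rewrite /in_Gamma /word_deg sumrB -!(big_morph Posz PoszD (erefl 0%:Z)) !sum_count_gen.
rewrite dvdz2_subn -(count_predC (fun g : gen N => g.1 == true)).
by congr (~~ odd (_ + _)); apply: eq_count => -[[] ?].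
Qed.

Section AlgHom.
Context {k : fieldType} {A B : algType k}.

Lemma alg_hom_linear {f : A -> B} : is_alg_hom f -> linear f.
Proof. by case. Qed.

Lemma alg_hom_monoid {f : A -> B} : is_alg_hom f -> monoid_morphism f.
Proof. by case=> _ f1 fM; split. Qed.

Definition rmorphism_of {f : A -> B} (hf : is_alg_hom f) : {rmorphism A -> B} :=
  HB.pack f (GRing.isZmodMorphism.Build A B f (zmod_morphism_linear (alg_hom_linear hf)))
    (GRing.isMonoidMorphism.Build A B f (alg_hom_monoid hf)).

Lemma rmorphism_ofZ {f : A -> B} (hf : is_alg_hom f) : scalable (rmorphism_of hf).
Proof. exact: scalable_linear (alg_hom_linear hf). Qed.

Lemma rmorphism_alg_hom {f : {rmorphism A -> B}} : scalable f -> is_alg_hom f.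
Proof. by move=> fZ; split=> [c u v||u v]; rewrite ?rmorphD ?fZ ?rmorph1 ?rmorphM. Qed.

End AlgHom.

Section Smash.
Context {k : fieldType} (A : algType k).

Record alg_invol := AlgInvol {
  invol_map :> {rmorphism A -> A};
  invol_scalable : scalable invol_map;
  invol_involutive : involutive invol_map }.

(* [Smash u1 u2] stands for u1 + u2 tau in the smash product A # Z/2, where
   tau^2 = 1 and tau u = t u tau. *)
Record smash (t : alg_invol) := Smash { smash_fst : A; smash_snd : A }.
Arguments smash_fst {t}.
Arguments smash_snd {t}.
Arguments Smash {t}.

Variable t : alg_invol.

Definition smash_pair (u : smash t) := (smash_fst u, smash_snd u).
Definition pair_smash (u : A * A) : smash t := Smash u.1 u.2.
Lemma smash_pairK : cancel smash_pair pair_smash. Proof. by case. Qed.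
HB.instance Definition _ := Choice.copy (smash t) (can_type smash_pairK).

Definition smash_add (u v : smash t) : smash t :=
  Smash (smash_fst u + smash_fst v) (smash_snd u + smash_snd v).
Definition smash_opp (u : smash t) : smash t := Smash (- smash_fst u) (- smash_snd u).

Lemma smash_addA : associative smash_add.
Proof. by move=> [? ?] [? ?] [? ?]; rewrite /smash_add /= !addrA. Qed.
Lemma smash_addC : commutative smash_add.
Proof. by move=> [? ?] [? ?]; congr Smash; exact: addrC. Qed.
Lemma smash_add0 : left_id (Smash 0 0) smash_add.
Proof. by move=> [? ?]; rewrite /smash_add /= !add0r. Qed.
Lemma smash_addN : left_inverse (Smash 0 0) smash_opp smash_add.
Proof. by move=> [? ?]; rewrite /smash_add /= !addNr. Qed.
HB.instance Definition _ :=
  GRing.isZmodule.Build (smash t) smash_addA smash_addC smash_add0 smash_addN.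

Definition smash_scale (c : k) (u : smash t) : smash t :=
  Smash (c *: smash_fst u) (c *: smash_snd u).

Lemma smash_scaleA c c' u : smash_scale c (smash_scale c' u) = smash_scale (c * c') u.
Proof. by case: u => ? ?; rewrite /smash_scale /= !scalerA. Qed.
Lemma smash_scale1 : left_id 1 smash_scale.
Proof. by case=> ? ?; rewrite /smash_scale /= !scale1r. Qed.
Lemma smash_scaleDr : right_distributive smash_scale +%R.
Proof. by move=> c [? ?] [? ?]; rewrite /smash_scale /GRing.add /= /smash_add /= !scalerDr. Qed.
Lemma smash_scaleDl u : {morph smash_scale^~ u : c c' / c + c'}.
Proof. by case: u => ? ? c c'; rewrite /smash_scale /GRing.add /= /smash_add /= !scalerDl. Qed.
HB.instance Definition _ := GRing.Zmodule_isLmodule.Build k (smash t)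
  smash_scaleA smash_scale1 smash_scaleDr smash_scaleDl.

Definition smash_mul (u v : smash t) : smash t :=
  Smash (smash_fst u * smash_fst v + smash_snd u * t (smash_snd v))
        (smash_fst u * smash_snd v + smash_snd u * t (smash_fst v)).
Definition smash_one : smash t := Smash 1 0.

Lemma smash_mulA : associative smash_mul.
Proof.
move=> [u1 u2] [v1 v2] [w1 w2]; rewrite /smash_mul /= !rmorphD !rmorphM.
rewrite !invol_involutive !mulrDl !mulrDr !mulrA.
by congr Smash; rewrite -!addrA; congr (_ + _); rewrite [RHS]addrC addrA.
Qed.

Lemma smash_mul1r : left_id smash_one smash_mul.
Proof. by move=> [u1 u2]; rewrite /smash_mul /= !mul1r !mul0r !addr0. Qed.

Lemma smash_mulr1 : right_id smash_one smash_mul.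
Proof. by move=> [u1 u2]; rewrite /smash_mul /= rmorph0 rmorph1 !mulr1 !mulr0 addr0 add0r. Qed.

Lemma smash_mulDl : left_distributive smash_mul +%R.
Proof.
by move=> [u1 u2] [v1 v2] [w1 w2]; rewrite /smash_mul /= !mulrDl; congr Smash; rewrite addrACA.
Qed.

Lemma smash_mulDr : right_distributive smash_mul +%R.
Proof.
move=> [u1 u2] [v1 v2] [w1 w2]; rewrite /smash_mul /= !rmorphD !mulrDr.
by congr Smash; rewrite addrACA.
Qed.

Lemma smash_one_neq0 : smash_one != 0.
Proof. by apply/eqP=> -[] /eqP; rewrite oner_eq0. Qed.

HB.instance Definition _ := GRing.Zmodule_isNzRing.Build (smash t)
  smash_mulA smash_mul1r smash_mulr1 smash_mulDl smash_mulDr smash_one_neq0.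

Lemma smash_addE (u1 u2 v1 v2 : A) :
  Smash u1 u2 + Smash v1 v2 = Smash (u1 + v1) (u2 + v2) :> smash t.
Proof. by []. Qed.

Lemma smash_scaleE (c : k) (u1 u2 : A) :
  c *: Smash u1 u2 = Smash (c *: u1) (c *: u2) :> smash t.
Proof. by []. Qed.

Lemma smash_mulE (u1 u2 v1 v2 : A) :
  Smash u1 u2 * Smash v1 v2 = Smash (u1 * v1 + u2 * t v2) (u1 * v2 + u2 * t v1).
Proof. by []. Qed.

Lemma smash_scalerAl (c : k) (u v : smash t) : c *: (u * v) = (c *: u) * v.
Proof. by case: u v => [u1 u2] [v1 v2]; congr Smash; rewrite scalerDr !scalerAl. Qed.

HB.instance Definition _ := GRing.Lmodule_isLalgebra.Build k (smash t) smash_scalerAl.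

Lemma smash_scalerAr (c : k) (u v : smash t) : c *: (u * v) = u * (c *: v).
Proof.
by case: u v => [u1 u2] [v1 v2]; congr Smash; rewrite !invol_scalable scalerDr !scalerAr.
Qed.

HB.instance Definition _ := GRing.Lalgebra_isAlgebra.Build k (smash t) smash_scalerAr.

HB.instance Definition _ :=
  GRing.isLinear.Build k (smash t) A *:%R smash_fst (fun _ _ _ => erefl).
HB.instance Definition _ :=
  GRing.isLinear.Build k (smash t) A *:%R smash_snd (fun _ _ _ => erefl).

End Smash.

Arguments Smash {k A t}.
Arguments smash_fst {k A t}.
Arguments smash_snd {k A t}.

Lemma sbracketE (k : fieldType) (A : algType k) pl pu pv (u v : A) :
  sbracket pl pu pv u v = u * v + (-1) ^+ (~~ pl (+) (pu && pv)) *: (v * u).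
Proof.
rewrite /sbracket signr_addb -scalerA; congr (_ + _).
by case: pl; case: (pu && pv); rewrite /= ?(expr0, expr1, mul1r, mulN1r, opprK, scale1r, scaleN1r).
Qed.

Lemma sbracketZ (k : fieldType) (A : algType k) pl pu pv (c c' : k) (u v : A) :
  sbracket pl pu pv (c *: u) (c' *: v) = (c * c') *: sbracket pl pu pv u v.
Proof.
rewrite !sbracketE -!scalerAl -!scalerAr !scalerA scalerDr scalerA.
by congr (_ + _ *: _); ring.
Qed.

Section UniversalProperty.
Context {k : fieldType} {pl : bool} {a b : nat} {A : algType k} {x d : 'I_(a + b) -> A}.
Hypothesis HA : is_A pl a b A x d.

Lemma is_A_lift {B : algType k} {y e : 'I_(a + b) -> B} : Arels pl a b y e ->
  exists2 F : {rmorphism A -> B}, scalable F & forall i, F (x i) = y i /\ F (d i) = e i.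
Proof.
move=> /(HA.2 B) [[f [hf fxd]] _].
by exists (rmorphism_of hf); [exact: rmorphism_ofZ | exact: fxd].
Qed.

Lemma is_A_endo_id (F : {rmorphism A -> A}) : scalable F ->
  (forall i, F (x i) = x i /\ F (d i) = d i) -> F =1 id.
Proof.
move=> FZ Fxd; have [_ HU] := HA.2 A x d HA.1.
have id_hom : is_alg_hom (@idfun A) by [].
exact: (HU F idfun (rmorphism_alg_hom FZ) id_hom Fxd).
Qed.

Lemma exists_parity_invol : exists t : alg_invol A,
  forall i, t (x i) = (-1) ^+ odd_idx a i *: x i /\ t (d i) = (-1) ^+ odd_idx a i *: d i.
Proof.
have [[Rdx Rxx Rdd] _] := HA.
pose s (i : 'I_(a + b)) : k := (-1) ^+ odd_idx a i.
have Rs : Arels pl a b (fun i => s i *: x i) (fun i => s i *: d i).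
  split=> i j; rewrite sbracketZ ?Rxx ?Rdd ?scaler0 // Rdx.
  by case: eqP => [->|_]; rewrite ?mulr0n ?scaler0 // -expr2 sqrr_sign scale1r.
have [t tZ txd] := is_A_lift Rs.
have tK : involutive t.
  move=> u; apply: (is_A_endo_id (t \o t)) => [c v|i] /=; first by rewrite !tZ.
  have [tx td] := txd i.
  by rewrite tx td !tZ tx td !scalerA -expr2 sqrr_sign !scale1r.
by exists (AlgInvol _ _ tZ tK).
Qed.

End UniversalProperty.

Definition ord_swap {m n : nat} (i : 'I_(m + n)) : 'I_(n + m) :=
  match split i with inl j => rshift n j | inr j => lshift m j end.

Lemma ord_swapK m n : cancel (@ord_swap m n) (@ord_swap n m).
Proof.
move=> i; rewrite {2}/ord_swap; case: (splitP i) => j ij; apply: val_inj => /=.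
  by rewrite /ord_swap (unsplitK (inr j)) /= ij.
by rewrite /ord_swap (unsplitK (inl j)) /= ij.
Qed.

Lemma odd_idx_swap m n (i : 'I_(m + n)) : odd_idx n (ord_swap i) = ~~ odd_idx m i.
Proof.
rewrite /odd_idx /ord_swap; case: (splitP i) => j /= ->.
  by rewrite leq_addr -ltnNge ltn_ord.
by rewrite leq_addr leqNgt ltn_ord.
Qed.

Definition gen_swap {m n : nat} (g : gen (m + n)) : gen (n + m) := (g.1, ord_swap g.2).

Lemma gen_swapK m n : cancel (@gen_swap m n) (@gen_swap n m).
Proof. by case=> o i; rewrite /gen_swap /= ord_swapK. Qed.

Section Lift.
Context {k : fieldType} (r : k).
Hypothesis hr : r ^+ 2 = -1.

(* The scalar relating a product of lifted generators of parities s (in A) to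
   the corresponding word of A: a factor r per odd generator, and the sign of
   theta for every odd generator a tau is moved across to its right. *)
Fixpoint lift_coef (s : seq bool) : k :=
  if s is o :: s' then r ^+ o * (-1) ^+ count id s' * lift_coef s' else 1.

Lemma lift_coefN s : lift_coef s * lift_coef (map negb s) = r ^+ odd (size s).
Proof.
elim: s => [|o s IH] /=; first by rewrite mulr1.
have csz : (count id s + count id (map negb s) = size s)%N.
  by rewrite count_map -(count_predC id s).
have ro : r ^+ o * r ^+ (~~ o) = r by case: o; rewrite /= ?mulr1 ?mul1r.
transitivity (r ^+ o * r ^+ (~~ o) * ((-1) ^+ count id s * (-1) ^+ count id (map negb s))
              * (lift_coef s * lift_coef (map negb s))); first by ring.
rewrite ro -exprD csz IH -signr_odd; case: (odd (size s)) => /=.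
  by rewrite expr0 expr1 mulrN1 mulNr -expr2 hr opprK.
by rewrite expr0 expr1 !mulr1.
Qed.

Lemma lift_coef_sq (o : bool) : r ^+ o * r ^+ o * (-1) ^+ o = 1.
Proof. by case: o; rewrite ?expr0 ?expr1 ?mulr1 // -expr2 hr mulN1r opprK. Qed.

Context {pl : bool} {a b : nat} {A : algType k} {x d : 'I_(a + b) -> A}.
Hypothesis HA : is_A pl a b A x d.

Definition twisted_word (w : seq (gen (b + a))) : A :=
  lift_coef [seq ~~ odd_idx b g.2 | g <- w] *: word_val x d (map gen_swap w).

Lemma twisted_word_cons g w : twisted_word (g :: w) =
  r ^+ (~~ odd_idx b g.2) *: gen_val x d (gen_swap g) *
  ((-1) ^+ count id [seq ~~ odd_idx b g.2 | g <- w] *: twisted_word w).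
Proof. by rewrite /twisted_word /= /word_val big_cons -scalerAl -!scalerAr !scalerA mulrA. Qed.

Section LiftToSmash.
Variable t : alg_invol A.
Hypothesis tx : forall i,
  t (x i) = (-1) ^+ odd_idx a i *: x i /\ t (d i) = (-1) ^+ odd_idx a i *: d i.

Lemma t_gen g : t (gen_val x d g) = (-1) ^+ odd_idx a g.2 *: gen_val x d g.
Proof. by case: g => [[] i]; rewrite /gen_val /=; case: (tx i). Qed.

Lemma t_word w :
  t (word_val x d w) = (-1) ^+ count (fun g => odd_idx a g.2) w *: word_val x d w.
Proof.
elim: w => [|g w IH]; first by rewrite /word_val !big_nil rmorph1 scale1r.
rewrite /word_val !big_cons -/(word_val x d w) rmorphM IH t_gen /= exprD.
by rewrite -scalerAl -scalerAr scalerA.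
Qed.

Lemma sbracket_lift {oI oJ : bool} {u v : A} :
  t u = (-1) ^+ oI *: u -> t v = (-1) ^+ oJ *: v ->
  sbracket (~~ pl) (~~ oI) (~~ oJ)
    (Smash 0 (r ^+ oI *: u) : smash A t) (Smash 0 (r ^+ oJ *: v)) =
  Smash ((r ^+ oI * r ^+ oJ * (-1) ^+ oJ) *: sbracket pl oI oJ u v) 0.
Proof.
move=> tu tv; rewrite !sbracketE !smash_mulE !invol_scalable tu tv rmorph0.
rewrite smash_scaleE smash_addE !mul0r !mulr0 !add0r scaler0; congr Smash.
rewrite scalerDr -!scalerAl -!scalerAr !scalerA; congr (_ *: _ + _ *: _); first by ring.
by case: pl oI oJ {tu tv} => [] [] []; rewrite /= ?expr0 ?expr1; ring.
Qed.

Definition lift_gen (g : gen (b + a)) : smash A t :=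
  Smash 0 (r ^+ (~~ odd_idx b g.2) *: gen_val x d (gen_swap g)).

Lemma lift_gen_rels :
  Arels (~~ pl) b a (fun j => lift_gen (true, j)) (fun j => lift_gen (false, j)).
Proof.
have [[Rdx Rxx Rdd] _] := HA.
have swN (j : 'I_(b + a)) : odd_idx b j = ~~ odd_idx a (ord_swap j).
  by rewrite odd_idx_swap negbK.
split=> i j; rewrite /lift_gen /gen_val /= !swN !negbK.
- rewrite (sbracket_lift (tx _).2 (tx _).1) Rdx (inj_eq (can_inj (@ord_swapK _ _))).
  by case: (i =P j) => [->|_]; rewrite ?lift_coef_sq ?scale1r ?scaler0.
- by rewrite (sbracket_lift (tx _).1 (tx _).1) Rxx scaler0.
- by rewrite (sbracket_lift (tx _).2 (tx _).2) Rdd scaler0.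
Qed.

Lemma t_twisted_word w :
  t (twisted_word w) = (-1) ^+ count id [seq ~~ odd_idx b g.2 | g <- w] *: twisted_word w.
Proof.
rewrite /twisted_word invol_scalable t_word !scalerA [lift_coef _ * _]mulrC !count_map.
congr (_ * _ *: _); apply: congr1.
by apply: eq_count => g /=; rewrite odd_idx_swap.
Qed.

Lemma prod_lift_gen w : \prod_(g <- w) lift_gen g =
  if odd (size w) then Smash 0 (twisted_word w) else Smash (twisted_word w) 0.
Proof.
elim: w => [|g w IH]; first by rewrite big_nil /twisted_word /word_val big_nil scale1r.
rewrite big_cons IH twisted_word_cons -t_twisted_word /=.
by case: (odd (size w)); rewrite smash_mulE rmorph0 !mul0r !mulr0 ?add0r ?addr0.
Qed.

End LiftToSmash.

Context {A' : algType k} {x' d' : 'I_(b + a) -> A'}.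
Hypothesis HA' : is_A (~~ pl) b a A' x' d'.

Lemma exists_transfer : exists2 F : {linear A' -> A},
  forall w, F (word_val x' d' w) = if odd (size w) then 0 else twisted_word w &
  forall u v, Cpart x' d' u -> Cpart x' d' v -> F (u * v) = F u * F v.
Proof.
have [t tx] := exists_parity_invol HA.
have [Phi PhiZ Phi_gen] := is_A_lift HA' (lift_gen_rels _ tx).
have Phi_word w : Phi (word_val x' d' w) =
    if odd (size w) then Smash 0 (twisted_word w) else Smash (twisted_word w) 0.
  rewrite /word_val rmorph_prod -(prod_lift_gen _ tx); apply: eq_bigr => -[[] j] _.
    exact: (Phi_gen j).1.
  exact: (Phi_gen j).2.
have Phi_Cpart u : Cpart x' d' u -> smash_snd (Phi u) = 0.
  case=> cws [/allP cwsC ->]; rewrite rmorph_sum linear_sum big1_seq // => -[c w] /cwsC /=.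
  by rewrite in_Gamma_word PhiZ Phi_word => /negbTE ->; rewrite smash_scaleE scaler0.
pose F u := smash_fst (Phi u).
have F_linear : linear F by move=> c u v; rewrite /F rmorphD PhiZ linearP.
exists (HB.pack_for {linear A' -> A} F (GRing.isLinear.Build k A' A *:%R F F_linear)).
  by move=> w /=; rewrite /F Phi_word; case: ifP.
move=> u v Cu Cv /=.
rewrite /F rmorphM; move: (Phi_Cpart u Cu) (Phi_Cpart v Cv).
by case: (Phi u) (Phi v) => [u1 u2] [v1 v2] /= -> ->; rewrite mul0r addr0.
Qed.

End Lift.

Arguments twisted_word {k} r {a b A} x d w.

Lemma word_par_swap a b (w : seq (gen (b + a))) :
  ~~ odd (size w) -> word_par a (map gen_swap w) = word_par b w.
Proof.
move=> ev; rewrite /word_par count_map.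
rewrite (eq_count (a2 := predC (fun g : gen (b + a) => odd_idx b g.2))); last first.
  by move=> g /=; rewrite odd_idx_swap.
move: ev; rewrite -(count_predC (fun g : gen (b + a) => odd_idx b g.2) w).
by rewrite oddD negb_add => /eqP.
Qed.

Section TransferMap.
Context {k : fieldType} {r : k} {a b : nat}.
Context {A : algType k} {x d : 'I_(a + b) -> A} {A' : algType k} {x' d' : 'I_(b + a) -> A'}.
Context {F : {linear A' -> A}}.
Hypothesis F_word : forall w,
  F (word_val x' d' w) = if odd (size w) then 0 else twisted_word r x d w.

Lemma transfer_in_span (P : seq (gen (b + a)) -> bool) (Q : seq (gen (a + b)) -> bool) u :
  (forall w, ~~ odd (size w) -> P w -> Q (map gen_swap w)) ->
  in_span x' d' P u -> in_span x d Q (F u).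
Proof.
move=> PQ [cws [/allP cwsP ->]].
exists [seq (cw.1 * lift_coef r [seq ~~ odd_idx b g.2 | g <- cw.2], map gen_swap cw.2)
       | cw <- cws & ~~ odd (size cw.2)]; split.
  by apply/allP => cw' /mapP [cw]; rewrite mem_filter => /andP [ev /cwsP Pcw] ->; exact: PQ.
rewrite linear_sum big_map big_filter [RHS]big_mkcond /=; apply: eq_bigr => -[c w] _ /=.
by rewrite linearZZ F_word /twisted_word; case: (odd (size w)); rewrite /= ?scaler0 ?scalerA.
Qed.

Lemma transfer_Cpart u : Cpart x' d' u -> Cpart x d (F u).
Proof. by apply: transfer_in_span => w ev _; rewrite in_Gamma_word size_map. Qed.

Lemma transfer_Apar par u : Apar b x' d' par u -> Apar a x d par (F u).
Proof. by apply: transfer_in_span => w ev /eqP <-; rewrite word_par_swap. Qed.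

Lemma transfer1 : F 1 = 1.
Proof. by have := F_word [::]; rewrite /twisted_word /word_val /= !big_nil scale1r. Qed.

Hypothesis hr : r ^+ 2 = -1.
Context {G : {linear A -> A'}}.
Hypothesis G_word : forall w,
  G (word_val x d w) = if odd (size w) then 0 else twisted_word r x' d' w.

Lemma transferK u : Cpart x' d' u -> G (F u) = u.
Proof.
case=> cws [/allP cwsC ->]; rewrite !linear_sum; apply: eq_big_seq => -[c w] /cwsC /=.
rewrite in_Gamma_word => /negbTE ev.
rewrite !linearZZ F_word ev /twisted_word linearZZ G_word size_map ev /twisted_word.
have -> : [seq ~~ odd_idx a g.2 | g <- map gen_swap w] =
          map negb [seq ~~ odd_idx b g.2 | g <- w].
  by rewrite -!map_comp; apply: eq_map => g /=; rewrite odd_idx_swap.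
rewrite (mapK (@gen_swapK b a)) !scalerA -mulrA lift_coefN //.
by rewrite size_map ev expr0 mulr1.
Qed.

End TransferMap.

Lemma exists_sqrtN1 (k : closedFieldType) : exists r : k, r ^+ 2 = -1.
Proof.
have [r] := @solve_monicpoly k 2 (fun i => if i == 0%N then -1 else 0) isT.
by rewrite big_ord_recr big_ord1 /= mul0r addr0 expr0 mulr1 => hr; exists r.
Qed.

Theorem mainTheorem16 (k : closedFieldType) (hk : [pchar k] =i pred0)
  (p q : nat) (hn : (0 < p + q)%N)
  (Ap : algType k) (xp dp : 'I_(p + q) -> Ap) (HAp : is_A true p q Ap xp dp)
  (Am : algType k) (xm dm : 'I_(q + p) -> Am) (HAm : is_A false q p Am xm dm) :
  super_iso (Cpart xp dp) (fun par => Apar p xp dp par)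
            (Cpart xm dm) (fun par => Apar q xm dm par).
Proof.
have [r hr] := exists_sqrtN1 k.
have [F F_word F_mul] := exists_transfer r hr HAm HAp.
have [G G_word _] := exists_transfer r hr HAp HAm.
have GF := transferK F_word hr G_word.
have FG := transferK G_word hr F_word.
exists F; split; split.
- by move=> u; exact: (transfer_Cpart F_word).
- by move=> v Cv; exists (G v); [exact: (transfer_Cpart G_word) | exact: FG].
- by move=> u v Cu Cv Fuv; rewrite -(GF u Cu) Fuv GF.
- by move=> c u v _ _; exact: linearP.
- exact: transfer1 F_word.
- exact: F_mul.
- by move=> par u _; exact: (transfer_Apar F_word).
Qed.
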